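(* Let $(V,c)$ be a network satisfying the Yang-type inequality with constant $C_{YT}$. Let $\Omega\subset V$ be finite with Dirichlet eigenvalues $\lambda_1\le\cdots\le\lambda_{|\Omega|}$. If $\lambda_k\le1+C_{YT}$ for some $1\le k<|\Omega|$, then $$\sum_{i=1}^k\frac{\lambda_i-\lambda_{\min}}{\lambda_{k+1}-\lambda_i}\ge\frac1{C_{YT}}\sum_{i=1}^k(1-\lambda_i).$$
   Context: A network is a pair $(V,c)$ with $V$ countable and $c:V\times V\to[0,\infty)$ symmetric with $\pi(x)=\sum_yc(x,y)<\infty$; $P(x,y)=c(x,y)/\pi(x)$ and $\Delta f(x)=\sum_yP(x,y)(f(x)-f(y))$, a bounded self-adjoint operator on $L^2(V,\pi)$ (inner product $\sum_x\pi(x)f(x)\overline{g(x)}$) with spectrum in $[0,2]$; $\lambda_{\min}$ is the bottom of its spectrum. For finite $\Omega\subset V$, the Dirichlet eigenvalues $\lambda_1\le\cdots\le\lambda_{|\Omega|}$ of $\Omega$ are the eigenvalues (with multiplicity) of the compression $\Delta_\Omega f=\mathbf 1_\Omega\cdot\Delta f$ on functions vanishing outside $\Omega$. The network satisfies the Yang-type inequality with constant $C_{YT}$ if for every finite $\Omega\subset V$ and every $k<|\Omega|$: $\sum_{i=1}^k(\lambda_{k+1}-\lambda_i)^2(1-\lambda_i)\le C_{YT}\sum_{i=1}^k(\lambda_{k+1}-\lambda_i)(\lambda_i-\lambda_{\min})$. *)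

From HB Require Import structures.
From mathcomp Require Import all_boot all_order all_algebra.
From mathcomp Require Import all_classical all_reals all_analysis.
Set Implicit Arguments. Unset Strict Implicit. Unset Printing Implicit Defensive.
Import Order.TTheory GRing.Theory Num.Theory.
Local Open Scope classical_set_scope.
Local Open Scope ring_scope.

Section Network.
Variables (R : realType) (V : countType).

Definition sumV (f : V -> R) : R :=
  fine (\esum_(y in [set: V]) (Num.max (f y) 0)%:E) -
  fine (\esum_(y in [set: V]) (Num.max (- f y) 0)%:E).

Variable c : V -> V -> R.

Definition pi (x : V) : R := fine (\esum_(y in [set: V]) (c x y)%:E).

(* (V,c) is a network: c >= 0, symmetric, pi(x) finite (and > 0, so that
   P(x,y) = c(x,y)/pi(x) makes sense). *)
Definition is_network : Prop :=
  [/\ forall x y, 0 <= c x y,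
      forall x y, c x y = c y x,
      forall x, (\esum_(y in [set: V]) (c x y)%:E < +oo)%E
    & forall x, 0 < pi x].

Definition P (x y : V) : R := c x y / pi x.

Definition Lap (f : V -> R) (x : V) : R := sumV (fun y => P x y * (f x - f y)).

Definition l2 (f : V -> R) : Prop :=
  (\esum_(x in [set: V]) (pi x * f x ^+ 2)%:E < +oo)%E.

(* l is in the spectrum of Delta on L^2(V,pi): Delta - l is not a bijection
   of L^2(V,pi) onto itself (the inverse is then automatically bounded). *)
Definition in_spectrum (l : R) : Prop :=
  ~ (forall g, l2 g -> exists! f, l2 f /\ (forall x, Lap f x - l * f x = g x)).

Definition lambda_min : R := inf [set l | in_spectrum l].

(* Dirichlet Laplacian of a finite set Omega = image of an injective
   enumeration w : 'I_n -> V, written in the basis of indicator functions: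
   entry (i,j) = (Delta 1_{w j})(w i)  (i.e. 1_Omega * Delta restricted). *)
Definition dir_mx (n : nat) (w : 'I_n -> V) : 'M[R]_n :=
  \matrix_(i, j) Lap (fun y => (y == w j)%:R) (w i).

Definition dirichlet_eigs (n : nat) (w : 'I_n -> V) (lam : seq R) : Prop :=
  sorted <=%R lam /\ char_poly (dir_mx w) = \prod_(l <- lam) ('X - l%:P).

(* Yang-type inequality with constant C (0-indexed: lam`_i = lambda_{i+1}) *)
Definition yang_type (C : R) : Prop :=
  forall (n : nat) (w : 'I_n -> V), injective w ->
  forall lam : seq R, dirichlet_eigs w lam ->
  forall k : nat, (k < n)%N ->
    \sum_(i < k) (lam`_k - lam`_i) ^+ 2 * (1 - lam`_i)
      <= C * \sum_(i < k) (lam`_k - lam`_i) * (lam`_i - lambda_min).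

End Network.

(** Put [a_i = lambda_{k+1} - lambda_i > 0] and
    [e_i = C (lambda_i - lambda_min) - a_i (1 - lambda_i)].  The Yang-type
    inequality says exactly [sum_i a_i e_i >= 0], and the claim is
    [sum_i e_i / a_i >= 0].  Since [lambda_i <= lambda_k <= 1 + C] for [i <= k],
    the families [a] and [e] are oppositely ordered, hence so are [-1/a] and
    [e]; two applications of Chebyshev's sum inequality carry the sign of
    [sum a e] first to [sum e] and then to [sum e / a]. *)

From HB Require Import structures.
From mathcomp Require Import all_boot all_order all_algebra.
From mathcomp Require Import all_classical all_reals all_analysis.
From mathcomp Require Import ring lra.
Set Implicit Arguments. Unset Strict Implicit. Unset Printing Implicit Defensive.
Import Order.TTheory GRing.Theory Num.Theory.
Local Open Scope ring_scope.

Section Chebyshev.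
Variables (R : realFieldType) (I : finType).

Lemma chebyshev_sum_antiordered (f g : I -> R) :
  (forall i j, (f i - f j) * (g i - g j) <= 0) ->
  #|I|%:R * \sum_i f i * g i <= (\sum_i f i) * (\sum_i g i).
Proof.
move=> fg_anti.
have double_sum : \sum_i \sum_j (f i - f j) * (g i - g j) =
    2 * (#|I|%:R * \sum_i f i * g i - (\sum_i f i) * (\sum_i g i)).
  have row_sum i : \sum_j (f i - f j) * (g i - g j) =
      #|I|%:R * (f i * g i) - f i * (\sum_j g j) - g i * (\sum_j f j)
      + \sum_j f j * g j.
    rewrite (eq_bigr (fun j => f i * g i - f i * g j - g i * f j + f j * g j));
      last by move=> j _; ring.
    by rewrite !big_split /= !sumrN sumr_const -!mulr_sumr mulr_natl.
  rewrite (eq_bigr _ (fun i _ => row_sum i)) !big_split /= !sumrN sumr_const.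
  by rewrite -[(\sum_j f j * g j) *+ _]mulr_natl -!mulr_suml -mulr_sumr; ring.
have : \sum_i \sum_j (f i - f j) * (g i - g j) <= 0.
  by apply: sumr_le0 => i _; apply: sumr_le0 => j _; apply: fg_anti.
rewrite double_sum; lra.
Qed.

Lemma sumr_div_ge0_antiordered (a e : I -> R) :
  (forall i, 0 < a i) -> (forall i j, (a i - a j) * (e i - e j) <= 0) ->
  0 <= \sum_i a i * e i -> 0 <= \sum_i e i / a i.
Proof.
move=> a_gt0 ae_anti sum_ae_ge0.
have [/card0_eq I0 | /card_gt0P [i0 _]] := posnP #|I|.
  by rewrite big1 // => i; have := I0 i; rewrite !inE.
have card_gt0 : 0 < #|I|%:R :> R by rewrite ltr0n; apply/card_gt0P; exists i0.
have sum_a_gt0 : 0 < \sum_i a i.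
  rewrite (bigD1 i0) //= ltr_pwDl //.
  by apply: sumr_ge0 => i _; apply/ltW.
have sum_e_ge0 : 0 <= \sum_i e i.
  rewrite -(pmulr_rge0 _ sum_a_gt0).
  apply: le_trans _ (chebyshev_sum_antiordered ae_anti).
  exact: mulr_ge0 (ltW card_gt0) sum_ae_ge0.
have inv_e_anti i j : (- (a i)^-1 - - (a j)^-1) * (e i - e j) <= 0.
  have -> : - (a i)^-1 - - (a j)^-1 = (a i - a j) / (a i * a j).
    by field; rewrite !gt_eqF.
  rewrite mulrAC mulr_le0_ge0 // invr_ge0.
  exact: mulr_ge0 (ltW (a_gt0 i)) (ltW (a_gt0 j)).
have := chebyshev_sum_antiordered inv_e_anti.
have sum_inv_le0 : \sum_i - (a i)^-1 <= 0.
  by apply: sumr_le0 => i _; rewrite oppr_le0 invr_ge0 ltW.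
move/le_trans/(_ (mulr_le0_ge0 sum_inv_le0 sum_e_ge0)).
rewrite pmulr_rle0 // (eq_bigr (fun i => - (e i / a i))) ?sumrN ?oppr_le0 //.
by move=> i _; rewrite mulNr mulrC.
Qed.

End Chebyshev.

Section YangDefect.
Variables (R : realFieldType) (C l0 L : R).

Definition yang_defect (x : R) : R := C * (x - l0) - (L - x) * (1 - x).

Lemma yang_defect_antiordered (x y : R) : x <= 1 + C -> y <= L ->
  ((L - x) - (L - y)) * (yang_defect x - yang_defect y) <= 0.
Proof.
move=> x_le y_le; rewrite /yang_defect.
have -> : (L - x - (L - y)) * (C * (x - l0) - (L - x) * (1 - x) -
    (C * (y - l0) - (L - y) * (1 - y))) =
    - ((x - y) ^+ 2 * ((1 + C - x) + (L - y))) by ring.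
by rewrite oppr_le0 mulr_ge0 ?sqr_ge0 // addr_ge0 // subr_ge0.
Qed.

Lemma mul_yang_defect (x : R) :
  (L - x) * yang_defect x = C * ((L - x) * (x - l0)) - (L - x) ^+ 2 * (1 - x).
Proof. by rewrite /yang_defect; ring. Qed.

Lemma yang_defect_div (x : R) : x != L ->
  yang_defect x / (L - x) = C * ((x - l0) / (L - x)) - (1 - x).
Proof. by move=> xL; rewrite /yang_defect; field; rewrite subr_eq0 eq_sym. Qed.

End YangDefect.

Section DirichletEigenvalues.
Variables (R : realType) (V : countType) (c : V -> V -> R).
Variables (n : nat) (w : 'I_n -> V) (lam : seq R).
Hypothesis eigs : dirichlet_eigs c w lam.

Lemma dirichlet_eigs_size : size lam = n.
Proof.
case: eigs => _ /(congr1 (fun p : {poly R} => size p)).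
by rewrite size_char_poly size_prod_XsubC => -[].
Qed.

Lemma dirichlet_eigs_le (i j : nat) : (i <= j)%N -> (j < n)%N -> lam`_i <= lam`_j.
Proof.
move=> ij jn; have [lam_sorted _] := eigs.
have in_range m : (m <= j)%N -> m \in [pred m | (m < size lam)%N].
  by rewrite inE dirichlet_eigs_size => /leq_ltn_trans; apply.
exact: (sorted_leq_nth le_trans lexx 0 lam_sorted)
  (in_range i ij) (in_range j (leqnn j)) ij.
Qed.

End DirichletEigenvalues.

Theorem corollary5p3 (R : realType) (V : countType) (c : V -> V -> R) (C : R) :
  is_network c -> yang_type c C -> 0 < C ->
  forall (n : nat) (w : 'I_n -> V), injective w ->
  forall lam : seq R, dirichlet_eigs c w lam ->
  forall k : nat, (1 <= k)%N -> (k < n)%N ->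
  lam`_k.-1 <= 1 + C ->
  lam`_k.-1 < lam`_k ->
  \sum_(i < k) (lam`_i - lambda_min c) / (lam`_k - lam`_i)
    >= C^-1 * \sum_(i < k) (1 - lam`_i).
Proof.
move=> _ yang C_gt0 n w w_inj lam eigs k k_ge1 k_lt_n lam_k1_le lam_k1_lt.
set l0 := lambda_min c; set L := lam`_k in lam_k1_lt *.
have lam_le_k1 (i : 'I_k) : lam`_i <= lam`_k.-1.
  apply: (dirichlet_eigs_le eigs); last exact: leq_ltn_trans (leq_pred k) k_lt_n.
  by rewrite -ltnS prednK.
have lam_lt_L (i : 'I_k) : lam`_i < L := le_lt_trans (lam_le_k1 i) lam_k1_lt.
have : 0 <= \sum_(i < k) (C * ((lam`_i - l0) / (L - lam`_i)) - (1 - lam`_i)).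
  rewrite (eq_bigr (fun i : 'I_k => yang_defect C l0 L lam`_i / (L - lam`_i)))
    => [|i _]; last by rewrite yang_defect_div ?lt_eqF.
  apply: (@sumr_div_ge0_antiordered _ _ (fun i : 'I_k => L - lam`_i)
    (fun i : 'I_k => yang_defect C l0 L lam`_i)) => [i | i j |].
  - by rewrite subr_gt0.
  - apply: yang_defect_antiordered; first exact: le_trans (lam_le_k1 i) _.
    exact: ltW.
  - under eq_bigr do rewrite mul_yang_defect.
    by rewrite sumrB -mulr_sumr subr_ge0; exact: yang n w w_inj lam eigs k k_lt_n.
by rewrite sumrB -mulr_sumr subr_ge0 ler_pdivrMl.
Qed.
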